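(* Let $d\ge1$, let $\mu$ be a probability measure on $(0,+\infty)$ and fix $\alpha>0$. Then, almost surely, for every $x\in\mathbb{R}^d\setminus B$, $$\frac{T(B,x)}{\|x\|}\ge \alpha\left(1-S_{\|x\|}(\xi_\alpha)-\frac{1}{\|x\|}\right).$$
   Context: $B_r$ is the closed Euclidean ball of radius $r$ centered at $0$, $B=B_1$. Let $\chi$ be a Poisson point process on $\mathbb{R}^d\times[0,+\infty)\times(0,+\infty)$ with intensity the product of Lebesgue measure on $\mathbb{R}^d\times[0,+\infty)$ and $\mu$. Passage times: $\tau(x,x)=0$; for each $(c,t,r)\in\chi$ and $y\in(c+B_r)\setminus\{c\}$, $\tau(c,y)=t$; otherwise $\tau(x,y)=+\infty$. A path is a finite sequence $\pi=(x_0,\dots,x_k)$ of distinct points of $\mathbb{R}^d$; $T(\pi)=\sum_{i=0}^{k-1}\tau(x_i,x_{i+1})$, and $T(A,x)=\inf\{T(\pi):\pi\text{ a path from some }a\in A\text{ to }x\}$. Define $\xi_\alpha=\{(c,r):\exists t\le\alpha r,\ (c,t,r)\in\chi\}$, a Poisson point process on $\mathbb{R}^d\times(0,+\infty)$ with intensity Lebesgue $\otimes\,\alpha r\mu(dr)$. For $x\in\mathbb{R}^d$, $r(x)=r$ if $(x,r)\in\xi_\alpha$ (a.s. unique), and $r(x)=0$ otherwise. For a path $\pi=(x_0,\dots,x_n)$, $|\pi|=\sum_{i=0}^{n-1}\|x_{i+1}-x_i\|$ and $A(\pi)=\sum_{i=0}^n r(x_i)$. For $l>0$, $S_l(\xi_\alpha)=\sup\{A(\pi)/|\pi|\}$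 over all paths with $x_0=0$ and $|\pi|>l$. *)

From HB Require Import structures.
From mathcomp Require Import all_boot all_order all_algebra.
From mathcomp Require Import all_classical all_reals all_analysis.
Set Implicit Arguments. Unset Strict Implicit. Unset Printing Implicit Defensive.
Import Order.TTheory GRing.Theory Num.Theory.
Local Open Scope classical_set_scope.
Local Open Scope ring_scope.

Section Defs.
Variables (R : realType) (d : nat).

Definition enorm (x : 'rV[R]_d) : R := Num.sqrt (\sum_(i < d) x 0 i ^+ 2).
Definition unit_ball : set 'rV[R]_d := [set x | enorm x <= 1].

(* marks (c, t, r) *)
Definition mark := ('rV[R]_d * R * R)%type.

(* Poisson probability mass function, valid also for rate 0 *)
Definition ppmf (lam : R) (k : nat) : R := expR (- lam) * lam ^+ k / k`!%:R.

Definition box (a b : 'rV[R]_d) (s t c e : R) : set mark :=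
  [set p : mark | (forall i, a 0 i <= p.1.1 0 i < b 0 i) /\
           s <= p.1.2 < t /\ c < p.2 <= e].

Definition count_eq (Omega : Type) (chi : Omega -> set mark) (A : set mark) (k : nat)
  : set Omega := [set w | ((chi w `&` A) #= `I_k)%card].

(* chi is a Poisson point process on R^d x [0,+oo) x (0,+oo) with intensity
   Leb_d (x) Leb_[0,+oo) (x) mu, described through its finite-dimensional
   distributions on (pairwise disjoint) boxes, which form a semiring
   generating the Borel sets *)
Definition is_PPP (dO : measure_display) (Omega : measurableType dO)
  (P : probability Omega R) (mu : probability R R) (chi : Omega -> set mark) :=
  (forall w, chi w `<=` [set p | 0 <= p.1.2 /\ 0 < p.2]) /\
  forall (n : nat) (a b : 'I_n -> 'rV[R]_d) (s t c e : 'I_n -> R) (k : 'I_n -> nat),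
    (forall j, (forall i, a j 0 i < b j 0 i) /\ 0 <= s j < t j /\ 0 <= c j < e j) ->
    (forall j j', j != j' ->
       box (a j) (b j) (s j) (t j) (c j) (e j) `&`
       box (a j') (b j') (s j') (t j') (c j') (e j') = set0) ->
    (forall j, measurable (count_eq chi (box (a j) (b j) (s j) (t j) (c j) (e j)) (k j))) /\
    P (\bigcap_(j in [set: 'I_n]) count_eq chi (box (a j) (b j) (s j) (t j) (c j) (e j)) (k j))
    = (\prod_(j < n) ppmf ((\prod_(i < d) (b j 0 i - a j 0 i)) * (t j - s j)
                            * fine (mu `]c j, e j]%classic)) (k j))%:E.

Local Open Scope ereal_scope.

Definition tau (chi : set mark) (x y : 'rV[R]_d) : \bar R :=
  if x == y then 0
  else ereal_inf [set t%:E | t in [set t : R | exists r, chi (x, t, r) /\ (enorm (y - x) <= r)%R]].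

Definition path_time (chi : set mark) (x0 : 'rV[R]_d) (s : seq 'rV[R]_d) : \bar R :=
  \sum_(p <- zip (x0 :: s) s) tau chi p.1 p.2.

Definition pass_time (chi : set mark) (A : set 'rV[R]_d) (x : 'rV[R]_d) : \bar R :=
  ereal_inf [set v | exists (x0 : 'rV[R]_d) (s : seq 'rV[R]_d),
     A x0 /\ uniq (x0 :: s) /\ last x0 s = x /\ v = path_time chi x0 s].

Local Close Scope ereal_scope.

Definition xi (alpha : R) (chi : set mark) : set ('rV[R]_d * R) :=
  [set cr | exists t, t <= alpha * cr.2 /\ chi (cr.1, t, cr.2)].

(* r(x): the radius attached to x in xi_alpha (a.s. unique), 0 otherwise *)
Definition rad (alpha : R) (chi : set mark) (x : 'rV[R]_d) : R :=
  xget 0 [set r | xi alpha chi (x, r)].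

Definition path_len (x0 : 'rV[R]_d) (s : seq 'rV[R]_d) : R :=
  \sum_(p <- zip (x0 :: s) s) enorm (p.2 - p.1).

Definition path_A (alpha : R) (chi : set mark) (x0 : 'rV[R]_d) (s : seq 'rV[R]_d) : R :=
  \sum_(y <- x0 :: s) rad alpha chi y.

Definition S_l (alpha : R) (chi : set mark) (l : R) : \bar R :=
  ereal_sup [set (path_A alpha chi 0 s / path_len 0 s)%:E | s in
     [set s : seq 'rV[R]_d | uniq ((0 : 'rV[R]_d) :: s) /\ l < path_len 0 s]].

End Defs.

From Pilot Require Import Defs.
From HB Require Import structures.
From mathcomp Require Import all_boot all_order all_algebra.
From mathcomp Require Import all_classical all_reals all_analysis.
From mathcomp Require Import ring lra.
Import Order.TTheory GRing.Theory Num.Theory.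
Local Open Scope classical_set_scope.
Local Open Scope ring_scope.

(* Almost surely no two marks share a centre: cutting a bounded box into n slabs
   along one coordinate, the probability that some slab holds two marks is at
   most n (lambda/n)^2, which tends to 0.  For such a configuration, a step of a
   path from y to y' costs tau >= alpha (|y' - y| - r(y)): either the mark at y
   lies in xi_alpha and its radius r(y) reaches y', or that radius is below
   tau / alpha.  Summing over the part of a path after its last visit of B and
   restarting it at 0 gives |pi| <= 1 + A(pi) + T / alpha, and A(pi) <= S |pi|
   once the path is extended slightly so that |pi| > |x|. *)

Lemma cauchy_schwarz_sum (R : realType) (n : nat) (a b : 'I_n -> R) :
  (\sum_i a i * b i) ^+ 2 <= (\sum_i a i ^+ 2) * (\sum_i b i ^+ 2).
Proof.
(* Lagrange's identity: the gap is half a sum of squares. *)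
have lagrange : \sum_i \sum_j (a i * b j - a j * b i) ^+ 2 =
    2 * ((\sum_i a i ^+ 2) * (\sum_i b i ^+ 2)) - 2 * (\sum_i a i * b i) ^+ 2.
  have sqr_expand i j : (a i * b j - a j * b i) ^+ 2 =
      a i ^+ 2 * b j ^+ 2 + a j ^+ 2 * b i ^+ 2 - 2 * (a i * b i * (a j * b j)).
    by ring.
  under eq_bigr do under eq_bigr do rewrite sqr_expand.
  under eq_bigr do rewrite sumrB big_split /= -mulr_sumr.
  rewrite sumrB big_split /=.
  under [X in _ + X - _]eq_bigr do rewrite -mulr_suml.
  under [X in _ - X]eq_bigr do rewrite -mulr_sumr -mulr_sumr.
  rewrite -[X in X + _ - _]mulr_suml -[X in _ + X - _]mulr_sumr.
  rewrite -[X in _ - X]mulr_sumr -[X in _ - _ * X]mulr_suml expr2.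
  ring.
have : 0 <= \sum_i \sum_j (a i * b j - a j * b i) ^+ 2.
  by apply: sumr_ge0 => i _; apply: sumr_ge0 => j _; exact: sqr_ge0.
rewrite lagrange; lra.
Qed.

Section EuclideanNorm.
Context {R : realType} {d : nat}.
Implicit Types x y z : 'rV[R]_d.

Lemma enorm_ge0 x : 0 <= enorm x.
Proof. exact: sqrtr_ge0. Qed.

Lemma enorm0 : enorm (0 : 'rV[R]_d) = 0.
Proof. by rewrite /enorm big1 ?sqrtr0 // => i _; rewrite mxE expr0n. Qed.

Lemma enormD x y : enorm (x + y) <= enorm x + enorm y.
Proof.
rewrite /enorm; set A := \sum_i x 0 i ^+ 2; set B := \sum_i y 0 i ^+ 2.
set D := \sum_i x 0 i * y 0 i.
have -> : \sum_i (x + y) 0 i ^+ 2 = A + B + 2 * D.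
  rewrite /A /B /D mulr_sumr -!big_split /=.
  by apply: eq_bigr => i _; rewrite mxE; ring.
have A0 : 0 <= A by apply: sumr_ge0 => i _; exact: sqr_ge0.
have B0 : 0 <= B by apply: sumr_ge0 => i _; exact: sqr_ge0.
have cs : D ^+ 2 <= (Num.sqrt A * Num.sqrt B) ^+ 2.
  by rewrite exprMn !sqr_sqrtr //; exact: cauchy_schwarz_sum.
have sA := sqrtr_ge0 A; have sB := sqrtr_ge0 B.
have D_le : D <= Num.sqrt A * Num.sqrt B.
  by have := mulr_ge0 sA sB; nra.
rewrite -(ger0_norm (addr_ge0 sA sB)) -sqrtr_sqr; apply: ler_wsqrtr.
by rewrite -[A in A + _ + _](sqr_sqrtr A0) -[B in _ + B + _](sqr_sqrtr B0); nra.
Qed.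

Lemma enormB_le x y z : enorm (z - x) <= enorm (y - x) + enorm (z - y).
Proof.
have -> : z - x = (y - x) + (z - y) by rewrite [RHS]addrC addrA subrK.
exact: enormD.
Qed.

End EuclideanNorm.

Definition marks_positive {R : realType} {d : nat} (C : set (mark R d)) :=
  forall p, C p -> 0 <= p.1.2 /\ 0 < p.2.

Definition unique_centres_in {R : realType} {d : nat} (A C : set (mark R d)) :=
  forall p q, C p -> C q -> A p -> A q -> p.1.1 = q.1.1 -> p = q.

Section Deterministic.
Context {R : realType} {d : nat}.
Variables (C : set (mark R d)) (alpha : R).
Hypotheses (C_pos : marks_positive C) (C_uniq : unique_centres_in setT C)
  (alpha_gt0 : 0 < alpha).
Implicit Types (x y z : 'rV[R]_d) (s : seq 'rV[R]_d).

Lemma tau_ge0 x y : (0 <= tau C x y)%E.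
Proof.
rewrite /tau; case: eqP => // _; apply/ereal_infP => _ [t [r [Cm _]] <-].
by rewrite lee_fin; exact: (C_pos _ Cm).1.
Qed.

Lemma tau_mark {x y t} : x != y -> tau C x y = t%:E ->
  exists r, C (x, t, r) /\ enorm (y - x) <= r.
Proof.
rewrite /tau => /negbTE ->.
have [[t0 [r0 [Cm0 yx_le0]]]|none] :=
  pselect (exists t0 r0, C (x, t0, r0) /\ enorm (y - x) <= r0); last first.
  set S := (X in ereal_inf X); suff -> : S = set0 by rewrite ereal_inf0.
  by apply/seteqP; split => // z [u [r Cr] _]; apply: none; exists u, r.
set S := (X in ereal_inf X); have -> : S = [set t0%:E].
  apply/seteqP; split => [z [u [r [Cm _]] <-]|z ->]; last by exists t0 => //; exists r0.
  by have [-> _] := C_uniq _ _ Cm Cm0 I I erefl.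
by rewrite ereal_inf1 => -[<-]; exists r0.
Qed.

Lemma rad_ge0 x : 0 <= Defs.rad alpha C x.
Proof.
by rewrite /Defs.rad; case: xgetP => // r _ [t [_ Cm]]; exact: ltW (C_pos _ Cm).2.
Qed.

Lemma rad_mark {x t r} : C (x, t, r) -> t <= alpha * r -> Defs.rad alpha C x = r.
Proof.
move=> Cm t_le; rewrite /Defs.rad; apply: xget_unique; first by exists t.
by move=> r' [t' [_ Cm']]; have [] := C_uniq _ _ Cm' Cm I I erefl.
Qed.

(* If the mark at [x] is in xi_alpha, its radius is [rad x]; otherwise the
   radius is smaller than [t / alpha]. *)
Lemma dist_le_rad_tau {x y t} : tau C x y = t%:E ->
  enorm (y - x) <= Defs.rad alpha C x + t / alpha.
Proof.
have [<-|xy] := eqVneq x y.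
  rewrite /tau eqxx subrr enorm0 => -[<-]; rewrite mul0r addr0; exact: rad_ge0.
move=> /(tau_mark xy) [r [Cm yx_le]]; have [/= t0 _] := C_pos _ Cm.
have [t_le|t_gt] := leP t (alpha * r).
  rewrite (rad_mark Cm t_le).
  by have := divr_ge0 t0 (ltW alpha_gt0); lra.
have : r < t / alpha by rewrite ltr_pdivlMr // mulrC.
by have := rad_ge0 x; lra.
Qed.

Lemma path_time_cons x0 y s : path_time C x0 (y :: s) = (tau C x0 y + path_time C y s)%E.
Proof. by rewrite /path_time /= big_cons. Qed.

Lemma path_len_cons x0 y s : path_len x0 (y :: s) = enorm (y - x0) + path_len y s.
Proof. by rewrite /path_len /= big_cons. Qed.

Lemma path_A_cons x0 y s :
  path_A alpha C x0 (y :: s) = Defs.rad alpha C x0 + path_A alpha C y s.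
Proof. by rewrite /path_A big_cons. Qed.

Lemma path_len_rcons x0 s z :
  path_len x0 (rcons s z) = path_len x0 s + enorm (z - last x0 s).
Proof.
elim: s x0 => [|y s IH] x0; last by rewrite rcons_cons !path_len_cons IH addrA.
by rewrite /path_len /= big_cons /= unlock /= addr0 add0r.
Qed.

Lemma path_A_rcons x0 s z :
  path_A alpha C x0 (rcons s z) = path_A alpha C x0 s + Defs.rad alpha C z.
Proof. by rewrite /path_A -rcons_cons -cats1 big_cat big_seq1. Qed.

Lemma path_time_ge0 x0 s : (0 <= path_time C x0 s)%E.
Proof. by apply: sume_ge0 => p _; exact: tau_ge0. Qed.

Lemma path_A_ge0 x0 s : 0 <= path_A alpha C x0 s.
Proof. by apply: sumr_ge0 => y _; exact: rad_ge0. Qed.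

Lemma enorm_last_le_path_len x0 s : enorm (last x0 s - x0) <= path_len x0 s.
Proof.
elim: s x0 => [|y s IH] x0; first by rewrite subrr enorm0 /path_len big_nil.
rewrite path_len_cons; apply: le_trans (enormB_le x0 y (last y s)) _.
by rewrite lerD2l.
Qed.

Lemma path_len_le {x0 s T} : path_time C x0 s = T%:E ->
  path_len x0 s <= path_A alpha C x0 s + T / alpha.
Proof.
elim: s x0 T => [|y s IH] x0 T.
  rewrite /path_time /path_len /path_A /= !big_nil big_seq1 => -[<-].
  by rewrite mul0r !addr0; exact: rad_ge0.
rewrite path_time_cons path_len_cons path_A_cons.
have := tau_ge0 x0 y; have := path_time_ge0 y s.
case tau_xy : (tau C x0 y) => [t1| |] //; case Ty : (path_time C y s) => [t2| |] //.
move=> _ _ [<-]; have := dist_le_rad_tau tau_xy; have := IH _ _ Ty.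
by rewrite mulrDl; lra.
Qed.

Lemma exit_subpath {x0 s} : uniq (x0 :: s) -> has (fun z => enorm z <= 1) (x0 :: s) ->
  exists y0 s', [/\ enorm y0 <= 1, all (fun z => 1 < enorm z) s',
    last y0 s' = last x0 s, uniq (y0 :: s') &
    (path_time C y0 s' <= path_time C x0 s)%E].
Proof.
elim: s x0 => [|y s IH] x0 x0s_uniq; first by rewrite /= orbF => x0_in; exists x0, [::].
have [ys_hit _|ys_out] := boolP (has (fun z => enorm z <= 1) (y :: s)).
  have [y0 [s' [y0_in s'_out s'_last s'_uniq s'_time]]] :=
    IH y (proj2 (andP x0s_uniq)) ys_hit.
  exists y0, s'; split => //; rewrite path_time_cons.
  by apply: le_trans s'_time _; rewrite leeDr ?tau_ge0.
move=> /= /orP[x0_in|ys_hit]; last by case/negP: ys_out.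
exists x0, (y :: s); split => //.
by rewrite (eq_all (fun z => ltNge 1 (enorm z))) all_predC.
Qed.

Lemma exists_fresh_near (i0 : 'I_d) (L : seq 'rV[R]_d) x {e} : 0 < e ->
  exists z, z \notin L /\ 0 < enorm (z - x) <= e.
Proof.
move=> e_gt0; pose u : 'rV[R]_d := \row_j (j == i0)%:R.
pose z k : 'rV[R]_d := x + (e / k.+1%:R) *: u.
have z_dist k : enorm (z k - x) = e / k.+1%:R.
  rewrite /z addrC addKr /enorm (bigD1 i0) //= big1 => [|j /negbTE ji].
    rewrite !mxE eqxx mulr1 addr0 sqrtr_sqr ger0_norm //.
    by apply: divr_ge0; [exact: ltW|exact: ler0n].
  by rewrite !mxE ji mulr0 expr0n.
have z_inj : injective z.
  move=> k l /(congr1 (fun v : 'rV[R]_d => v 0 i0)); rewrite !mxE eqxx !mulr1.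
  move/addrI/(mulfI (lt0r_neq0 e_gt0))/invr_inj/eqP.
  by rewrite eqr_nat => /eqP [].
set Z := [seq z k | k <- iota 0 (size L).+1].
have Z_uniq : uniq Z by rewrite map_inj_uniq // iota_uniq.
have : ~~ all (mem L) Z.
  apply/negP => /allP /(uniq_leq_size Z_uniq).
  by rewrite size_map size_iota ltnn.
rewrite -has_predC => /hasP [_ /mapP [k _ ->] zkL]; exists (z k); split => //.
rewrite z_dist divr_gt0 ?ltr0n //= ler_pdivrMr ?ltr0n //.
by rewrite ler_peMr ?ler1n // ltW.
Qed.

Lemma rooted_path {x x0 s T} : enorm x0 <= 1 -> uniq (x0 :: s) -> last x0 s = x ->
  path_time C x0 s = T%:E ->
  exists s', [/\ uniq (0 :: s'), last 0 s' = x &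
    path_len 0 s' <= 1 + path_A alpha C 0 s' + T / alpha].
Proof.
(* Keep the part of the path after its last visit of the ball, started at 0
   instead of at its first point [y0]: this costs at most [enorm y0 <= 1]. *)
move=> x0_in s_uniq s_last s_time.
have s_hit : has (fun z => enorm z <= 1) (x0 :: s) by rewrite /= x0_in.
have [y0 [s' [y0_in s'_out s'_last s'_uniq s'_time]]] := exit_subpath s_uniq s_hit.
have [T' s'_T' T'_le] : exists2 T', path_time C y0 s' = T'%:E & T' <= T.
  move: s'_time; rewrite s_time; have := path_time_ge0 y0 s'.
  by case: (path_time C y0 s') => [t| |] // _; rewrite lee_fin => ?; exists t.
have s'_len := path_len_le s'_T'.
have : T' / alpha <= T / alpha by rewrite ler_pM2r ?invr_gt0.
pose r := if y0 == 0 then s' else y0 :: s'.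
have [r_len r_A] :
    path_len 0 r <= enorm y0 + path_len y0 s' /\ path_A alpha C y0 s' <= path_A alpha C 0 r.
  rewrite /r; case: eqP => [->|_]; first by rewrite enorm0 add0r; split.
  by rewrite path_len_cons subr0 path_A_cons lerDr rad_ge0; split.
move=> T_le; exists r; split; last by lra.
- rewrite /r; case: eqP => [<-|/eqP y0_neq0] //.
  rewrite cons_uniq s'_uniq andbT in_cons negb_or eq_sym y0_neq0 /=.
  by apply/negP => /(allP s'_out); rewrite enorm0 ltr10.
- by rewrite /r; case: eqP => [<-|_] /=; rewrite s'_last.
Qed.

Lemma path_time_bound (i0 : 'I_d) {x x0 s T e} : 1 < enorm x -> enorm x0 <= 1 ->
  uniq (x0 :: s) -> last x0 s = x -> path_time C x0 s = T%:E -> 0 < e ->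
  exists q, [/\ (q%:E <= S_l alpha C (enorm x))%E, 0 <= q &
    (1 - q) * enorm x - 1 <= T / alpha + q * e].
Proof.
move=> x_out x0_in s_uniq s_last s_time e_gt0.
have [s' [s'_uniq s'_last s'_len]] := rooted_path x0_in s_uniq s_last s_time.
have x_le := enorm_last_le_path_len 0 s'; rewrite s'_last subr0 in x_le.
(* Appending a point close to [x] makes the path strictly longer than [enorm x]. *)
have [z [z_fresh /andP[zx_gt0 zx_le]]] := exists_fresh_near i0 (0 :: s') x e_gt0.
pose s'' := rcons s' z.
have len'' : path_len 0 s'' = path_len 0 s' + enorm (z - x).
  by rewrite path_len_rcons s'_last.
have A_le : path_A alpha C 0 s' <= path_A alpha C 0 s''.
  by rewrite path_A_rcons lerDl rad_ge0.
have len''_gt : enorm x < path_len 0 s'' by rewrite len''; lra.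
have len''_gt0 : 0 < path_len 0 s'' by have := enorm_ge0 x; lra.
set q := path_A alpha C 0 s'' / path_len 0 s''.
have q_ge0 : 0 <= q by rewrite divr_ge0 ?path_A_ge0 ?ltW.
have A''_eq : path_A alpha C 0 s'' = q * path_len 0 s'' by rewrite divfK ?lt0r_neq0.
exists q; split => //.
  apply: ereal_sup_ubound; exists s'' => //; split => //.
  by rewrite /s'' -rcons_cons rcons_uniq z_fresh s'_uniq.
have T_ge0 : 0 <= T by rewrite -lee_fin -s_time path_time_ge0.
have : 0 <= T / alpha by rewrite divr_ge0 // ltW.
have : q * enorm (z - x) <= q * e by rewrite ler_wpM2l.
rewrite len'' in A''_eq.
have [q_le1|q_gt1] := leP q 1.
  have : (1 - q) * enorm x <= (1 - q) * path_len 0 s' by rewrite ler_wpM2l ?subr_ge0.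
  by nra.
have : (1 - q) * enorm x <= 0.
  by apply: mulr_le0_ge0; [rewrite subr_le0 ltW | exact: enorm_ge0].
by nra.
Qed.

Lemma path_time_ge (i0 : 'I_d) {x x0 s T S} : S_l alpha C (enorm x) = S%:E ->
  1 < enorm x -> enorm x0 <= 1 -> uniq (x0 :: s) -> last x0 s = x ->
  path_time C x0 s = T%:E -> alpha * ((1 - S) * enorm x - 1) <= T.
Proof.
move=> S_eq x_out x0_in s_uniq s_last s_time.
have bound e := path_time_bound i0 x_out x0_in s_uniq s_last s_time (e := e).
have [q [+ q_ge0 _]] := bound 1 ltr01; rewrite S_eq lee_fin => q_le.
have S_ge0 : 0 <= S := le_trans q_ge0 q_le.
suff : (1 - S) * enorm x - 1 <= T / alpha.
  by rewrite -(ler_pM2l alpha_gt0) mulrCA divff ?mulr1 // gt_eqF.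
apply/ler_addgt0Pr => eps eps_gt0.
have S1_gt0 : 0 < S + 1 by lra.
have [q' [+ q'_ge0 q'_bound]] := bound (eps / (S + 1)) (divr_gt0 eps_gt0 S1_gt0).
rewrite S_eq lee_fin => q'_le.
have : S * (eps / (S + 1)) <= eps.
  by rewrite mulrA ler_pdivrMr // mulrC ler_pM2l // lerDl.
have : q' * (eps / (S + 1)) <= S * (eps / (S + 1)).
  by apply: ler_wpM2r => //; rewrite divr_ge0 // ltW.
have : (1 - S) * enorm x <= (1 - q') * enorm x.
  by apply: ler_wpM2r; [exact: enorm_ge0 | rewrite lerD2l lerN2].
lra.
Qed.

Lemma pass_time_lower_bound (i0 : 'I_d) x : ~ @unit_ball R d x ->
  (alpha%:E * (1 - S_l alpha C (enorm x) - ((enorm x)^-1)%:E)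
    <= pass_time C (@unit_ball R d) x * ((enorm x)^-1)%:E)%E.
Proof.
move=> x_notin; have x_out : 1 < enorm x by rewrite ltNge; apply/negP.
have xinv_ge0 : 0 <= (enorm x)^-1 by rewrite invr_ge0 enorm_ge0.
case S_eq : (S_l alpha C (enorm x)) => [S| |]; last first.
- have -> : pass_time C (@unit_ball R d) x = +oo%E.
    apply/ereal_inf_pinfty => _ [x0 [s [x0_in [s_uniq [s_last ->]]]]].
    have := path_time_ge0 x0 s; case s_time : (path_time C x0 s) => [T| |] // _.
    have [q [+ _ _]] := path_time_bound i0 x_out x0_in s_uniq s_last s_time ltr01.
    by rewrite S_eq leeNy_eq.
  by rewrite gt0_mulye ?lte_fin ?invr_gt0 ?leey // (lt_trans ltr01).
- by rewrite gt0_muleNy ?lte_fin // leNye.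
have lb : ((alpha * ((1 - S) * enorm x - 1))%:E <= pass_time C (@unit_ball R d) x)%E.
  apply/ereal_infP => _ [x0 [s [x0_in [s_uniq [s_last ->]]]]].
  have := path_time_ge0 x0 s; case s_time : (path_time C x0 s) => [T| |] // _.
    by rewrite lee_fin (path_time_ge i0 S_eq x_out x0_in s_uniq s_last s_time).
  exact: leey.
apply: le_trans (lee_wpmul2r _ lb); last by rewrite lee_fin.
have x_neq0 : enorm x != 0 by rewrite gt_eqF // (lt_trans ltr01 x_out).
change ((alpha * (1 - S - (enorm x)^-1))%:E <=
  (alpha * ((1 - S) * enorm x - 1))%:E * ((enorm x)^-1)%:E)%E.
rewrite -EFinM lee_fin.
by rewrite [X in _ <= X](_ : _ = alpha * (1 - S - (enorm x)^-1)) //; field.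
Qed.

End Deterministic.

Lemma card_eq_I1_unique {T : Type} {X : set T} {p q : T} :
  X p -> X q -> (X #= `I_1)%card -> p = q.
Proof.
move=> Xp Xq /eq_cardSP[x _]; rewrite II0 card_eq0 => /eqP X_x.
have in_X y : X y -> y = x.
  by move=> Xy; apply: contrapT => yx; have : (X `\ x) y by []; rewrite X_x.
by rewrite (in_X _ Xp) (in_X _ Xq).
Qed.

Lemma ereal_le0_div_succ (R : realType) (x : \bar R) (c : R) :
  (forall n, (x <= (c / n.+1%:R)%:E)%E) -> (x <= 0)%E.
Proof.
move=> x_le; have := x_le 0%N; case: x x_le => [r| |] //= x_le _; rewrite lee_fin.
rewrite leNgt; apply/negP => r_gt0; set n := Num.truncn (c / r).
have : c / r < n.+1%:R := truncnS_gt _.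
rewrite ltr_pdivrMr // => c_lt.
have := x_le n; rewrite lee_fin ler_pdivlMr ?ltr0n // mulrC.
lra.
Qed.

Definition count_ge2 {R : realType} {d : nat} {Omega : Type}
    (chi : Omega -> set (mark R d)) (A : set (mark R d)) : set Omega :=
  ~` (count_eq chi A 0 `|` count_eq chi A 1).

Definition box_mean {R : realType} {d : nat} (mu : probability R R)
    (a b : 'rV[R]_d) (s t c e : R) : R :=
  (\prod_(i < d) (b 0 i - a 0 i)) * (t - s) * fine (mu `]c, e]%classic).

Lemma count_ge2_two_marks {R : realType} {d : nat} {Omega : Type}
    (chi : Omega -> set (mark R d)) (A : set (mark R d)) w p q :
  chi w p -> chi w q -> A p -> A q -> p <> q -> count_ge2 chi A w.
Proof.
move=> chi_p chi_q Ap Aq pq [|]; rewrite /count_eq /=.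
  by rewrite II0 card_eq0 => /eqP E; have : (chi w `&` A) p by []; rewrite E.
by move/(card_eq_I1_unique (conj chi_p Ap) (conj chi_q Aq))/pq.
Qed.

Lemma ppmf_ge2_le (R : realType) (l : R) : 0 <= l -> 1 - (ppmf l 0 + ppmf l 1) <= l ^+ 2.
Proof.
move=> l_ge0; rewrite /ppmf !fact0 expr0 expr1 !mulr1 !divr1.
by have := expR_ge1Dx (- l); nra.
Qed.

Section PoissonBoxes.
Context {R : realType} {d : nat}.
Context {dO : measure_display} {Omega : measurableType dO} {P : probability Omega R}
  {mu : probability R R} {chi : Omega -> set (mark R d)}.
Hypothesis chi_PPP : is_PPP P mu chi.
Implicit Types (a b : 'rV[R]_d) (s t c e : R).

Lemma box_mean_ge0 {a b s t} c e : (forall i, a 0 i < b 0 i) -> s < t ->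
  0 <= box_mean mu a b s t c e.
Proof.
move=> ab st; rewrite /box_mean !mulr_ge0 ?fine_ge0 ?measure_ge0 //.
  by apply: prodr_ge0 => i _; rewrite subr_ge0 ltW.
by rewrite subr_ge0 ltW.
Qed.

Lemma count_eq_box k {a b s t c e} : (forall i, a 0 i < b 0 i) -> 0 <= s < t -> 0 <= c < e ->
  measurable (count_eq chi (box a b s t c e) k) /\
  P (count_eq chi (box a b s t c e) k) = (ppmf (box_mean mu a b s t c e) k)%:E.
Proof.
move=> ab st ce.
have [||meas prob] := chi_PPP.2 1%N (fun _ => a) (fun _ => b) (fun _ => s) (fun _ => t)
  (fun _ => c) (fun _ => e) (fun _ => k); first by [].
  by move=> j j'; rewrite !ord1 eqxx.
split; first exact: meas ord0.
by move: prob; rewrite big_ord1 bigcap_const //; exists ord0.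
Qed.

Lemma count_ge2_box {a b s t c e} : (forall i, a 0 i < b 0 i) -> 0 <= s < t -> 0 <= c < e ->
  measurable (count_ge2 chi (box a b s t c e)) /\
  (P (count_ge2 chi (box a b s t c e)) <= ((box_mean mu a b s t c e) ^+ 2)%:E)%E.
Proof.
move=> ab st ce.
have [meas0 prob0] := count_eq_box 0 ab st ce.
have [meas1 prob1] := count_eq_box 1 ab st ce.
have meas01 := measurableU _ _ meas0 meas1.
split; first exact: measurableC.
have disj : count_eq chi (box a b s t c e) 0 `&` count_eq chi (box a b s t c e) 1 = set0.
  apply/seteqP; split => // w [/= E0 E1].
  by have /card_eq_II := card_eq_trans (card_esym E0) E1.
rewrite probability_setC // measureU //.
rewrite [X in (_ - (X + _))%E]prob0 [X in (_ - (_ + X))%E]prob1.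
rewrite lee_fin; apply: ppmf_ge2_le; case/andP: st => _ st; exact: box_mean_ge0.
Qed.

Section Slabs.
Variables (i0 : 'I_d) (a b : 'rV[R]_d) (s t c e : R).
Hypotheses (ab : forall i, a 0 i < b 0 i) (st : 0 <= s < t) (ce : 0 <= c < e).

(* Cut the box along coordinate [i0] into [n.+1] slabs of equal width: two marks
   with the same centre lie in the same slab, which then holds two marks. *)
Let width n := (b 0 i0 - a 0 i0) / n.+1%:R.
Let slab_lo n k : 'rV[R]_d := \row_i (if i == i0 then a 0 i0 + k%:R * width n else a 0 i).
Let slab_hi n k : 'rV[R]_d := \row_i (if i == i0 then a 0 i0 + k.+1%:R * width n else b 0 i).
Let slab n k := box (slab_lo n k) (slab_hi n k) s t c e.
Let slab_index n (p : mark R d) := Num.truncn ((p.1.1 0 i0 - a 0 i0) / width n).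
Let two_in_a_slab n := \big[setU/set0]_(k < n.+1) count_ge2 chi (slab n k).

Let width_gt0 n : 0 < width n.
Proof. by rewrite divr_gt0 ?ltr0n // subr_gt0. Qed.

Let slab_lo_lt_hi n k i : slab_lo n k 0 i < slab_hi n k 0 i.
Proof. by rewrite !mxE; case: eqP => _ //; rewrite ltrD2l ltr_pM2r ?ltr_nat. Qed.

Let slab_mean n k :
  box_mean mu (slab_lo n k) (slab_hi n k) s t c e = box_mean mu a b s t c e / n.+1%:R.
Proof.
rewrite /box_mean (bigD1 i0) //= [in RHS](bigD1 i0) //= !mxE eqxx.
rewrite (eq_bigr (fun i => b 0 i - a 0 i)) => [|i /negbTE i_neq]; last by rewrite !mxE i_neq.
by rewrite -[k.+1%:R]natr1 /width; field; rewrite addrC natr1 pnatr_eq0.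
Qed.

Let slab_index_spec n {p} : box a b s t c e p ->
  slab n (slab_index n p) p /\ (slab_index n p < n.+1)%N.
Proof.
move=> [p_in p_tr]; have /andP[a_le p_lt] := p_in i0.
have y_ge0 : 0 <= (p.1.1 0 i0 - a 0 i0) / width n by rewrite divr_ge0 ?subr_ge0 // ltW.
have y_w : (p.1.1 0 i0 - a 0 i0) / width n * width n = p.1.1 0 i0 - a 0 i0.
  by rewrite divfK // gt_eqF.
have /andP[k_le k_gt] := truncn_itv y_ge0.
split; first split => //.
  move=> i; rewrite !mxE; case: eqP => [->|_]; last exact: p_in i.
  have : (slab_index n p)%:R * width n <= p.1.1 0 i0 - a 0 i0.
    by rewrite -[X in _ <= X]y_w ler_wpM2r // ltW.
  have : p.1.1 0 i0 - a 0 i0 < (slab_index n p).+1%:R * width n.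
    by rewrite -[X in X < _]y_w ltr_pM2r.
  by move=> ? ?; apply/andP; split; lra.
rewrite ltnS truncn_le_nat -(ltr_pM2r (width_gt0 n)) y_w /width mulrC divfK ?pnatr_eq0 //.
by rewrite ltrD2r.
Qed.

Let two_in_a_slab_measurable n : measurable (two_in_a_slab n).
Proof.
by apply: bigsetU_measurable => k _; have [] := count_ge2_box (slab_lo_lt_hi n k) st ce.
Qed.

(* Union bound over the [n.+1] slabs, each of mean [box_mean / n.+1]. *)
Let two_in_a_slab_prob n :
  (P (two_in_a_slab n) <= ((box_mean mu a b s t c e) ^+ 2 / n.+1%:R)%:E)%E.
Proof.
apply: le_trans (content_subadditive P (F := fun k => count_ge2 chi (slab n k)) (n := n.+1)
  _ (two_in_a_slab_measurable n) _) _ => //.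
  by move=> k _; have [] := count_ge2_box (slab_lo_lt_hi n k) st ce.
apply: (@le_trans _ _ (\sum_(k < n.+1) ((box_mean mu a b s t c e / n.+1%:R) ^+ 2)%:E)%E).
  apply: lee_sum => k _; rewrite -(slab_mean n k).
  exact: (count_ge2_box (slab_lo_lt_hi n k) st ce).2.
rewrite sumEFin lee_fin sumr_const card_ord -mulr_natr le_eqVlt; apply/orP; left.
by apply/eqP; field; rewrite addrC natr1 pnatr_eq0.
Qed.

Lemma ae_unique_centres_in_box : {ae P, forall w, unique_centres_in (box a b s t c e) (chi w)}.
Proof.
exists (\bigcap_n two_in_a_slab n); split.
- exact: bigcapT_measurable.
- apply/eqP; rewrite eq_le measure_ge0 andbT.
  apply: (@ereal_le0_div_succ R _ (box_mean mu a b s t c e ^+ 2)) => n.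
  apply: le_trans (two_in_a_slab_prob n).
  apply: le_measure; rewrite ?inE //; first exact: bigcapT_measurable.
  by move=> w; exact.
move=> w /= not_uniq; apply: contrapT => not_all; apply: not_uniq.
move=> p q chi_p chi_q Ap Aq pq_centre; apply: contrapT => pq; apply: not_all => n _.
have [p_slab p_lt] := slab_index_spec n Ap; have [q_slab _] := slab_index_spec n Aq.
have same_index : slab_index n q = slab_index n p by rewrite /slab_index pq_centre.
rewrite same_index in q_slab.
rewrite /two_in_a_slab -(bigcup_mkord n.+1 (fun k => count_ge2 chi (slab n k))).
by exists (slab_index n p) => //; exact: count_ge2_two_marks chi_p chi_q p_slab q_slab pq.
Qed.

End Slabs.

End PoissonBoxes.

Definition cube {R : realType} {d : nat} (M : R) : set (mark R d) :=
  box (const_mx (- M)) (const_mx M) 0 M 0 M.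

Lemma unique_centres_of_cubes {R : realType} {d : nat} {C : set (mark R d)} :
  marks_positive C -> (forall n : nat, unique_centres_in (cube n.+1%:R) C) ->
  unique_centres_in setT C.
Proof.
move=> C_pos cubes p q Cp Cq _ _ pq_centre.
have [/= tp_ge0 rp_gt0] := C_pos _ Cp; have [/= tq_ge0 rq_gt0] := C_pos _ Cq.
set K := \sum_i `|p.1.1 0 i| + p.1.2 + q.1.2 + p.2 + q.2.
have norm_le i : `|p.1.1 0 i| <= K.
  have : `|p.1.1 0 i| <= \sum_j `|p.1.1 0 j| by rewrite (bigD1 i) //= lerDl sumr_ge0.
  by rewrite /K; lra.
pose M : R := (Num.truncn K).+1%:R; have K_lt : K < M := truncnS_gt K.
have in_cube r : r.1.1 = p.1.1 -> 0 <= r.1.2 <= K -> 0 < r.2 <= K -> cube M r.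
  move=> r_centre /andP[tr_ge0 tr_le] /andP[rr_gt0 rr_le].
  split; last by split; apply/andP; split => //; lra.
  move=> i; rewrite !mxE r_centre; have := norm_le i.
  have /andP[lo hi] : - `|p.1.1 0 i| <= p.1.1 0 i <= `|p.1.1 0 i| by rewrite -ler_norml.
  by move=> ?; apply/andP; split; lra.
have sum_ge0 : 0 <= \sum_i `|p.1.1 0 i| by rewrite sumr_ge0.
apply: (cubes (Num.truncn K)) => //; apply: in_cube => //;
  by [|apply/andP; split => //; rewrite /K; lra].
Qed.

Theorem lemma2p4 (R : realType) (d : nat) (hd : (1 <= d)%N)
  (mu : probability R R) (hmu : mu `]0, +oo[%classic = 1%E)
  (alpha : R) (halpha : 0 < alpha)
  (dO : measure_display) (Omega : measurableType dO) (P : probability Omega R)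
  (chi : Omega -> set (mark R d)) (hchi : is_PPP P mu chi) :
  {ae P, forall w, forall x : 'rV[R]_d, ~ unit_ball x ->
     (pass_time (chi w) (@unit_ball R d) x * ((enorm x)^-1)%:E
      >= alpha%:E * (1 - S_l alpha (chi w) (enorm x) - ((enorm x)^-1)%:E))%E}.
Proof.
pose i0 : 'I_d := Ordinal hd.
have cubes : {ae P, forall w, forall n : nat, unique_centres_in (cube n.+1%:R) (chi w)}.
  apply: ae_foralln => n; apply: (ae_unique_centres_in_box hchi i0).
  - by move=> i; rewrite !mxE gtrN ?ltr0n.
  - by rewrite lexx ltr0n.
  - by rewrite lexx ltr0n.
apply: filterS cubes => w w_cubes x x_out.
have w_pos : marks_positive (chi w) := hchi.1 w.
have w_uniq := unique_centres_of_cubes w_pos w_cubes.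
exact: pass_time_lower_bound (chi w) alpha w_pos w_uniq halpha i0 x x_out.
Qed.
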